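(* Let $0\le q<N$, $n\ge1$, and let $c\in H^q(\mathcal{E}_0^\bullet\otimes_{\mathcal{O}}\mathcal{O}/\mathfrak{m}_0^n)$ satisfy $o_n^q(c)\ne0$. Then there exist an integer $n'$ with $1\le n'\le n$ and a class $c'\in H^q(\mathcal{E}_0^\bullet\otimes_{\mathcal{O}}\mathcal{O}/\mathfrak{m}_0^{n'})$ such that $$o^q_{n',n'-1}(c')=\rho^{q+1}_{n'-1}\big(o_n^q(c)\big)\neq 0\quad\text{in } H^{q+1}(\mathcal{E}_0^\bullet\otimes_{\mathcal{O}}\mathcal{O}/\mathfrak{m}_0^{n'}).$$
   Context: Setting. Let $B$ be a one-dimensional complex manifold (a disc) with holomorphic coordinate $t$ centred at a point $0\in B$; write $\mathcal{O}=\mathcal{O}_{B,0}$ and $\mathfrak{m}_0=t\mathcal{O}$ for its maximal ideal. Let $(E^\bullet,d^\bullet)$: $0\to E^0\xrightarrow{d^0}E^1\xrightarrow{d^1}\cdots\xrightarrow{d^{N-1}}E^N\to 0$ be a bounded complex of holomorphic vector bundles on $B$ whose differentials are $\mathcal{O}_B$-linear holomorphic bundle maps with $d^{q+1}\circ d^q=0$. For $s\in B$, $E_s^\bullet$ denotes the fibre complex (with differentials $d^q_s$) and $H^q(E_s)=\ker d^q_s/\mathrm{im}\, d^{q-1}_s$. Let $\mathcal{E}_0^q$ be the stalk at $0$ of the sheaf of holomorphic sections of $E^q$; for a germ $s$, $s(0)$ is its value at $0$. For $n\ge1$, $\mathcal{E}_0^\bullet\otimes_{\mathcal{O}}\mathcal{O}/\mathfrak{m}_0^n$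 is the induced truncated complex with cohomology $H^q(\mathcal{E}_0^\bullet\otimes_{\mathcal{O}}\mathcal{O}/\mathfrak{m}_0^n)$. Obstruction maps. $o_n^q:H^q(\mathcal{E}_0^\bullet\otimes\mathcal{O}/\mathfrak{m}_0^n)\to H^{q+1}(E_0)$ sends the class of $\tilde\alpha \bmod t^n$ (where $\tilde\alpha\in\mathcal{E}_0^q$ with $d^q\tilde\alpha\in t^n\mathcal{E}_0^{q+1}$) to the class of $(t^{-n}d^q\tilde\alpha)(0)$ (this is well defined). For $i\ge 0$, $\rho_i^q:H^q(E_0)\to H^q(\mathcal{E}_0^\bullet\otimes\mathcal{O}/\mathfrak{m}_0^{i+1})$ is $[\sigma]\mapsto[t^i\tilde\sigma \bmod t^{i+1}]$, where $\tilde\sigma$ is any germ with $\tilde\sigma(0)=\sigma$. For $0\le i\le n$ set $o^q_{n,i}=\rho_i^{q+1}\circ o_n^q: H^q(\mathcal{E}_0^\bullet\otimes\mathcal{O}/\mathfrak{m}_0^n)\to H^{q+1}(\mathcal{E}_0^\bullet\otimes\mathcal{O}/\mathfrak{m}_0^{i+1})$. *)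

From HB Require Import structures.
From mathcomp Require Import all_boot all_order all_algebra.
Set Implicit Arguments. Unset Strict Implicit. Unset Printing Implicit Defensive.
Import Order.TTheory GRing.Theory Num.Theory.
Local Open Scope ring_scope.

(* Algebraic model of the stalk complex E_0^bullet at 0:
   - R plays the role of O = O_{B,0}, t its uniformizer (m_0 = tR);
   - E^q_0 = R^(r q) (free, as the stalk of a holomorphic vector bundle);
   - d^q is the matrix D q : 'M_(r q.+1, r q), acting on column vectors;
   - reduction "mod t^k" realises _ (x)_O O/m_0^k ; k = 1 gives the fibre at 0. *)
Section StalkComplex.
Variables (R : idomainType) (t : R) (r : nat -> nat)
          (D : forall q : nat, 'M[R]_(r q.+1, r q)).

Definition congr_mod (k : nat) (m : nat) (x y : 'cV[R]_m) : Prop :=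
  exists w : 'cV[R]_m, x - y = t ^+ k *: w.

Definition cocycle_mod (k q : nat) (x : 'cV[R]_(r q)) : Prop :=
  congr_mod k (D q *m x) 0.

(* x mod t^k is a coboundary (im d^{q-1}, with d^{-1} = 0) *)
Definition coboundary_mod (k q : nat) : 'cV[R]_(r q) -> Prop :=
  match q return 'cV[R]_(r q) -> Prop with
  | 0 => fun x => congr_mod k x 0
  | p.+1 => fun x => exists y : 'cV[R]_(r p), congr_mod k x (D p *m y)
  end.

Definition class_eq_mod (k q : nat) (x y : 'cV[R]_(r q)) : Prop :=
  @coboundary_mod k q (x - y).

(* o_n^q : the class of alpha mod t^n is sent to the class of beta(0) where
   d^q alpha = t^n beta (beta is unique since t is a non-zero-divisor). *)
Definition obs_rep (n q : nat) (alpha : 'cV[R]_(r q)) (beta : 'cV[R]_(r q.+1))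
  : Prop := D q *m alpha = t ^+ n *: beta.

(* rho_i^q : [sigma] |-> [t^i sigma~ mod t^(i+1)]; on representatives. *)
Definition rho_rep (i q : nat) (sigma : 'cV[R]_(r q)) : 'cV[R]_(r q) :=
  t ^+ i *: sigma.

End StalkComplex.

Arguments congr_mod {R} t k {m} x y.
Arguments cocycle_mod {R} t {r} D k {q} x.
Arguments coboundary_mod {R} t {r} D k q _.
Arguments class_eq_mod {R} t {r} D k q x y.
Arguments obs_rep {R} t {r} D n {q} alpha beta.
Arguments rho_rep {R} t {r} i {q} sigma.

From HB Require Import structures.
From mathcomp Require Import all_boot all_order all_algebra.
From Stdlib Require Import Classical.
Set Implicit Arguments. Unset Strict Implicit. Unset Printing Implicit Defensive.
Import Order.TTheory GRing.Theory Num.Theory.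
Local Open Scope ring_scope.

(* Write c = [alpha mod t^n] with d alpha = t^n beta, so that
   o_n(c) = [beta(0)] is non-zero, i.e. beta is not a coboundary mod t.
   If rho_{n-1}(o_n(c)) = [t^(n-1) beta mod t^n] is non-zero we take n' = n.
   Otherwise t^(n-1) beta = d y + t^n w for some y, w; then
   d y = t^(n-1) (beta - t w), so [y mod t^(n-1)] is a class of level n - 1
   whose obstruction beta - t w agrees with beta modulo t.  Iterating this
   descent (an induction on n) must stop at some level n' >= 1, since at
   level 1 the image of o_1 is o_1 itself, which is non-zero. *)

Section StalkComplexFacts.
Variables (R : idomainType) (t : R) (r : nat -> nat)
          (D : forall q : nat, 'M[R]_(r q.+1, r q)).

Lemma congr_mod_refl (k m : nat) (x : 'cV[R]_m) : congr_mod t k x x.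
Proof. by exists 0; rewrite subrr scaler0. Qed.

Lemma congr_mod_sym (k m : nat) (x y : 'cV[R]_m) :
  congr_mod t k x y -> congr_mod t k y x.
Proof. by move=> [w hw]; exists (- w); rewrite scalerN -hw opprB. Qed.

Lemma congr_mod_trans (k m : nat) (x y z : 'cV[R]_m) :
  congr_mod t k x y -> congr_mod t k y z -> congr_mod t k x z.
Proof.
move=> [w1 hw1] [w2 hw2]; exists (w1 + w2).
by rewrite scalerDr -hw1 -hw2 addrA subrK.
Qed.

Lemma congr_mod_scale (i k m : nat) (x y : 'cV[R]_m) :
  congr_mod t k x y -> congr_mod t (i + k) (t ^+ i *: x) (t ^+ i *: y).
Proof. by move=> [w hw]; exists w; rewrite -scalerBr hw scalerA exprD. Qed.

Lemma coboundary_mod_congr (k q : nat) (x x' : 'cV[R]_(r q)) :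
  congr_mod t k x x' -> coboundary_mod t D k q x -> coboundary_mod t D k q x'.
Proof.
case: q x x' => [|p] x x' hxx' /=.
  by move=> hx; exact: congr_mod_trans (congr_mod_sym hxx') hx.
by move=> [y hy]; exists y; exact: congr_mod_trans (congr_mod_sym hxx') hy.
Qed.

Lemma coboundary_mod0 (k q : nat) : coboundary_mod t D k q 0.
Proof.
case: q => [|p] /=; first exact: congr_mod_refl.
by exists 0; rewrite mulmx0; exact: congr_mod_refl.
Qed.

Lemma congr_class_eq_mod (k q : nat) (x y : 'cV[R]_(r q)) :
  congr_mod t k x y -> class_eq_mod t D k q x y.
Proof.
move=> [w hw]; apply: (coboundary_mod_congr _ (coboundary_mod0 k q)).
by exists (- w); rewrite hw sub0r scalerN.
Qed.

Lemma obs_rep_cocycle (n q : nat) (alpha : 'cV[R]_(r q)) (beta : 'cV[R]_(r q.+1)) :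
  obs_rep t D n alpha beta -> cocycle_mod t D n alpha.
Proof. by move=> hb; exists beta; rewrite subr0. Qed.

Lemma obstruction_descent (n q : nat) (beta : 'cV[R]_(r q.+1)) :
  coboundary_mod t D n.+1 q.+1 (rho_rep t n beta) ->
  exists (alpha' : 'cV[R]_(r q)) (beta' : 'cV[R]_(r q.+1)),
    obs_rep t D n alpha' beta' /\ congr_mod t 1 beta' beta.
Proof.
move=> [y [w hyw]]; exists y, (beta - t *: w); split.
  by rewrite /obs_rep scalerBr scalerA -exprSr -hyw /rho_rep opprB addrC subrK.
by exists (- w); rewrite addrC addKr expr1 scalerN.
Qed.

Lemma minimal_obstruction_level (n q : nat) (alpha : 'cV[R]_(r q))
    (beta : 'cV[R]_(r q.+1)) :
  obs_rep t D n.+1 alpha beta -> ~ coboundary_mod t D 1 q.+1 beta ->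
  exists n' : nat, (1 <= n')%N /\ (n' <= n.+1)%N /\
    exists (alpha' : 'cV[R]_(r q)) (beta' : 'cV[R]_(r q.+1)),
      obs_rep t D n' alpha' beta' /\ congr_mod t 1 beta' beta /\
      ~ coboundary_mod t D n' q.+1 (rho_rep t n'.-1 beta').
Proof.
elim: n alpha beta => [|n IH] alpha beta hb hobs.
  exists 1%N; do 2!split=> //; exists alpha, beta.
  by split=> //; split; [exact: congr_mod_refl | rewrite /rho_rep scale1r].
have [hcob | hsurvive] := classic (coboundary_mod t D n.+2 q.+1 (rho_rep t n.+1 beta)).
  have [y [beta1 [hy hbeta1]]] := obstruction_descent hcob.
  have hobs1 : ~ coboundary_mod t D 1 q.+1 beta1.
    by move=> hc1; apply/hobs/(coboundary_mod_congr hbeta1).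
  have [n' [h1 [hn' [a' [b' [ho' [hb' hnc]]]]]]] := IH y beta1 hy hobs1.
  exists n'; do 2!split=> //; first exact: (leq_trans hn').
  by exists a', b'; do 2!split=> //; exact: (congr_mod_trans hb').
exists n.+2; do 2!split=> //; exists alpha, beta.
by split=> //; split=> //; exact: congr_mod_refl.
Qed.

End StalkComplexFacts.

Theorem proposition2p6 (R : idomainType) (t : R) (ht : t != 0)
    (N : nat) (r : nat -> nat) (hr : forall p, (N < p)%N -> r p = 0%N)
    (D : forall p : nat, 'M[R]_(r p.+1, r p))
    (hD : forall p : nat, D p.+1 *m D p = 0)
    (q n : nat) (hq : (q < N)%N) (hn : (1 <= n)%N)
    (alpha : 'cV[R]_(r q)) (beta : 'cV[R]_(r q.+1))
    (hc : cocycle_mod t D n alpha)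
    (hbeta : obs_rep t D n alpha beta)
    (hobs : ~ coboundary_mod t D 1 q.+1 beta) :
  exists n' : nat, (1 <= n')%N /\ (n' <= n)%N /\
    exists (alpha' : 'cV[R]_(r q)) (beta' : 'cV[R]_(r q.+1)),
      cocycle_mod t D n' alpha' /\
      obs_rep t D n' alpha' beta' /\
      class_eq_mod t D n' q.+1 (rho_rep t (n'.-1) beta') (rho_rep t (n'.-1) beta) /\
      ~ coboundary_mod t D n' q.+1 (rho_rep t (n'.-1) beta).
Proof.
case: n hn hc hbeta => // n _ _ hbeta.
have [n' [h1 [hn' [a' [b' [ho' [hb' hnc]]]]]]] :=
  minimal_obstruction_level hbeta hobs.
have hscaled : congr_mod t n' (rho_rep t n'.-1 b') (rho_rep t n'.-1 beta).
  by have := congr_mod_scale n'.-1 hb'; rewrite addn1 prednK.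
exists n'; do 2!split=> //; exists a', b'; split; first exact: obs_rep_cocycle ho'.
split=> //; split; first exact: congr_class_eq_mod.
by move=> hcob; apply/hnc/(coboundary_mod_congr (congr_mod_sym hscaled)).
Qed.
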